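(* Let $\Sigma$ be a finite alphabet, $\Omega$ a distribution of $\Sigma$ and $\mathsf{Obs}$ an observation function over $\Sigma$. Then $\Omega\models\mathsf{Obs}$ if and only if for every $\sigma\in\mathsf{Dom}(\mathsf{Obs})$, \[\mathsf{Obs}(\sigma)=\bigwedge_{\Sigma_i\in\Omega}\mathsf{Obs}_{\Sigma_i}(\sigma|_{\Sigma_i}),\] where $+$ is read as true and $-$ as false.
   Context: The projection $\sigma|_{\Sigma'}$ of a word $\sigma$ onto $\Sigma'\subseteq\Sigma$ is the subsequence of symbols of $\sigma$ lying in $\Sigma'$; for sets, $S|_{\Sigma'}=\{\sigma|_{\Sigma'}\mid\sigma\in S\}$. For languages $\mathcal L_i\subseteq\Sigma_i^\star$, $\|_{i=1}^n(\mathcal L_i,\Sigma_i)=\{\sigma\in(\bigcup_i\Sigma_i)^\star\mid\forall i.\ \sigma|_{\Sigma_i}\in\mathcal L_i\}$. A distribution of $\Sigma$ is a finite set $\Omega=\{\Sigma_1,\dots,\Sigma_n\}$ of subsets of $\Sigma$ with $\bigcup_i\Sigma_i=\Sigma$. A language $\mathcal L\subseteq\Sigma^\star$ is a product language over $\Omega$, written $\Omega\models\mathcal L$, if there are $\mathcal L_i\subseteq\Sigma_i^\star$ with $\mathcal L=\|_{i=1}^n(\mathcal L_i,\Sigma_i)$. An observation function over $\Sigma$ is a partial function $\mathsf{Obs}:\Sigma^\star\rightharpoonup\{+,-\}$ with finite domain $\mathsf{Dom}(\mathsf{Obs})$. A language $\mathcal L$ agrees with $\mathsf{Obs}$, written $\mathcal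 L\models\mathsf{Obs}$, if for all $\sigma\in\mathsf{Dom}(\mathsf{Obs})$: $\sigma\in\mathcal L\iff\mathsf{Obs}(\sigma)=+$. We write $\Omega\models\mathsf{Obs}$ if there exists $\mathcal L$ with $\Omega\models\mathcal L$ and $\mathcal L\models\mathsf{Obs}$. For $\Sigma'\subseteq\Sigma$, the local observation function $\mathsf{Obs}_{\Sigma'}$ has domain $\mathsf{Dom}(\mathsf{Obs})|_{\Sigma'}$ and, for $\sigma'$ in it, $\mathsf{Obs}_{\Sigma'}(\sigma')=+$ iff there is $\sigma\in\mathsf{Dom}(\mathsf{Obs})$ with $\sigma|_{\Sigma'}=\sigma'$ and $\mathsf{Obs}(\sigma)=+$, and $\mathsf{Obs}_{\Sigma'}(\sigma')=-$ otherwise. *)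

From mathcomp Require Import all_boot.
From mathcomp Require Import finmap.
Set Implicit Arguments. Unset Strict Implicit. Unset Printing Implicit Defensive.
Local Open Scope fmap_scope.

Section Defs.
Variable Sigma : finType.

Definition proj (S : {set Sigma}) (w : seq Sigma) : seq Sigma :=
  [seq a <- w | a \in S].

Definition is_distribution (Omega : {set {set Sigma}}) : Prop :=
  \bigcup_(S in Omega) S = [set: Sigma].

Definition product_language (Omega : {set {set Sigma}}) (L : seq Sigma -> Prop) : Prop :=
  exists Li : {set Sigma} -> seq Sigma -> Prop,
    (forall S w, S \in Omega -> Li S w -> all (fun a => a \in S) w) /\
    (forall w, L w <-> (forall S, S \in Omega -> Li S (proj S w))).

(* Observation function: finite partial map from words to {+,-} = {true,false} *)
Definition obs_fun := {fmap seq Sigma -> bool}.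

Definition agrees (L : seq Sigma -> Prop) (Obs : obs_fun) : Prop :=
  forall w b, Obs.[? w] = Some b -> (L w <-> b = true).

Definition dist_models_obs (Omega : {set {set Sigma}}) (Obs : obs_fun) : Prop :=
  exists L, product_language Omega L /\ agrees L Obs.

(* local observation function Obs_{S}: partial, with domain Dom(Obs)|_S *)
Definition local_obs (Obs : obs_fun) (S : {set Sigma}) (w : seq Sigma) : option bool :=
  if has (fun x : seq Sigma => proj S x == w) (domf Obs)
  then Some (has (fun x : seq Sigma => (proj S x == w) && (Obs.[? x] == Some true)) (domf Obs))
  else None.

End Defs.

From mathcomp Require Import all_boot.
From mathcomp Require Import finmap.
Set Implicit Arguments. Unset Strict Implicit. Unset Printing Implicit Defensive.
Local Open Scope fmap_scope.

(* A product language is closed under mixing: a word whose projection on each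
   component agrees with that of some word of the language is itself in it.
   So any product language agreeing with Obs contains every word all of whose
   local observations are positive, and the language of exactly those words is
   a product language; it agrees with Obs precisely under the stated
   condition. *)

Section LocalObservations.
Variables (Sigma : finType) (Omega : {set {set Sigma}}) (Obs : obs_fun Sigma).

Lemma local_obs_trueP (S : {set Sigma}) u :
  local_obs Obs S u = Some true <-> exists2 x, proj S x = u & Obs.[? x] = Some true.
Proof.
rewrite /local_obs; split.
- by case: ifP => // _ [] /hasP [x _ /andP [/eqP <- /eqP Obs_x]]; exists x.
- move=> [x proj_x Obs_x].
  have x_dom : x \in domf Obs by rewrite -fndSome Obs_x.
  rewrite ifT; last by apply/hasP; exists x; rewrite ?proj_x.
  by congr Some; apply/hasP; exists x; rewrite ?proj_x ?Obs_x ?eqxx.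
Qed.

Lemma all_mem_proj (S : {set Sigma}) w : all (fun a => a \in S) (proj S w).
Proof. by apply/allP => a; rewrite mem_filter => /andP []. Qed.

Lemma product_language_mix L w :
  product_language Omega L ->
  (forall S, S \in Omega -> exists2 x, L x & proj S x = proj S w) -> L w.
Proof.
move=> [Li [_ L_Li]] mix; apply/L_Li => S S_Omega.
by have [x /L_Li Lx <-] := mix S S_Omega; apply: Lx.
Qed.

Definition locally_positive w :=
  forall S, S \in Omega -> local_obs Obs S (proj S w) = Some true.

Lemma positive_locally_positive w :
  Obs.[? w] = Some true -> locally_positive w.
Proof. by move=> Obs_w S _; apply/local_obs_trueP; exists w. Qed.

Lemma product_language_locally_positive :
  product_language Omega locally_positive.
Proof.
exists (fun S u => local_obs Obs S u = Some true); split => // S w _.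
by move=> /local_obs_trueP [x <- _]; apply: all_mem_proj.
Qed.

Lemma locally_positive_sub L :
  product_language Omega L -> agrees L Obs ->
  forall w, locally_positive w -> L w.
Proof.
move=> prod_L agree_L w pos_w; apply: product_language_mix => // S S_Omega.
have /local_obs_trueP [x proj_x Obs_x] := pos_w S S_Omega.
by exists x => //; apply/(agree_L x true Obs_x).
Qed.

End LocalObservations.

Theorem mainTheorem3 (Sigma : finType) (Omega : {set {set Sigma}})
  (Obs : obs_fun Sigma) :
  is_distribution Omega ->
  (dist_models_obs Omega Obs <->
   (forall (w : seq Sigma) (b : bool), Obs.[? w] = Some b ->
      (b = true <-> (forall S, S \in Omega -> local_obs Obs S (proj S w) = Some true)))).
Proof.
move=> _; split.
- move=> [L [prod_L agree_L]] w b Obs_w; split.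
  + by move=> b_true; apply: positive_locally_positive; rewrite Obs_w b_true.
  + by move=> /(locally_positive_sub prod_L agree_L) /(agree_L w b Obs_w).
- move=> local_cond; exists (locally_positive Omega Obs); split.
  + exact: product_language_locally_positive.
  + by move=> w b Obs_w; split => /(local_cond w b Obs_w).
Qed.
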